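(* There exist point sets $U_n\subset\mathbb{R}^2$ of size $n^2/4+\Theta(n)$ such that every rooted directed tree with $n$ vertices has a planar dominance drawing with its vertices placed at distinct points of $U_n$.
   Context: A rooted (directed) tree is a tree whose edges are directed away from the root toward the leaves. A dominance drawing places vertices at distinct points so that there is a directed path from $u$ to $v$ if and only if both coordinates of $v$ are greater than or equal to the corresponding coordinates of $u$; it is planar if, with edges drawn as straight-line segments, no two edges cross. *)

From HB Require Import structures.
From mathcomp Require Import all_boot all_order all_algebra.
From mathcomp Require Import finmap.
Set Implicit Arguments. Unset Strict Implicit. Unset Printing Implicit Defensive.
Import Order.TTheory GRing.Theory Num.Theory.
Local Open Scope ring_scope.

Definition rooted_tree (n : nat) (e : rel 'I_n) (r : 'I_n) : Prop :=
  [/\ (forall x, ~~ e x r),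
      (forall v, v != r -> #|[set u | e u v]| = 1%N)
    & (forall v, connect e r v)].

Definition on_segment (R : realFieldType) (a b z : R * R) : Prop :=
  exists t : R, 0 <= t <= 1 /\
    z = (a.1 + t * (b.1 - a.1), a.2 + t * (b.2 - a.2)).

Definition dominance_drawing (R : realFieldType) (n : nat) (e : rel 'I_n)
    (p : 'I_n -> R * R) : Prop :=
  injective p /\
  forall u v, connect e u v <-> ((p u).1 <= (p v).1 /\ (p u).2 <= (p v).2).

Definition planar_drawing (R : realFieldType) (n : nat) (e : rel 'I_n)
    (p : 'I_n -> R * R) : Prop :=
  forall a b c d, e a b -> e c d -> (a, b) != (c, d) ->
  forall z, on_segment (p a) (p b) z -> on_segment (p c) (p d) z ->
    z \in [:: p a; p b] /\ z \in [:: p c; p d].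

From HB Require Import structures.
From mathcomp Require Import all_boot all_order all_algebra.
From mathcomp Require Import finmap.
From mathcomp Require Import reals.
From mathcomp Require Import zify.
From mathcomp Require Import lra.
Import Order.TTheory GRing.Theory Num.Theory.
Set Implicit Arguments. Unset Strict Implicit.

(* Order the children of every vertex heaviest subtree first; this makes
   "u lies left of v" a well-defined relation between incomparable vertices.
   Place v at
     x(v) = #(vertices left of v) + #(light edges on the root path of v),
     y(v) = #(vertices right of v) + #(heavy edges on the root path of v).
   Descending an edge increases both coordinates weakly and their sum
   strictly, while moving to a subtree further right increases x and
   decreases y; so this is a dominance drawing, and every dominance drawing
   of a rooted tree is planar. Each vertex other than v is exactly one of:
   left of v, right of v, a proper ancestor or a proper descendant of v;
   hence x + y + s = n where s is the subtree size of v. Moreover x = 0 or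
   x >= s: below the first light edge of the root path of v, its heavy
   sibling roots a subtree of size >= s lying entirely left of v. The pairs
   (x, y) with these two properties number n + floor(n^2/4).
*)

Lemma disjointP (T : finType) (A B : {pred T}) :
  reflect (forall x, x \in A -> x \in B -> False) [disjoint A & B].
Proof.
rewrite disjoint_subset; apply: (iffP subsetP) => [AB x /AB|AB x /AB xB].
  by rewrite inE => /negP.
by rewrite inE; apply/negP.
Qed.

Lemma cardsU_disjoint (T : finType) (A B : {set T}) :
  [disjoint A & B] -> #|A :|: B| = #|A| + #|B|.
Proof. by move=> dAB; apply/eqP; rewrite (leq_card_setU A B).2. Qed.

Section Plane.

Variable R : realFieldType.
Local Open Scope ring_scope.

Definition dom_le (P Q : R * R) : Prop := P.1 <= Q.1 /\ P.2 <= Q.2.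

Lemma dom_le_refl P : dom_le P P.
Proof. by split. Qed.

Lemma dom_le_trans P Q S : dom_le P Q -> dom_le Q S -> dom_le P S.
Proof. by move=> [? ?] [? ?]; split; apply: le_trans; eassumption. Qed.

Lemma dom_le_antisym P Q : dom_le P Q -> dom_le Q P -> P = Q.
Proof.
case: P Q => [x y] [x' y'] [/= ? ?] [/= ? ?].
by congr pair; apply/eqP; rewrite eq_le; apply/andP.
Qed.

Lemma on_segment_dom P Q z : on_segment P Q z -> dom_le P Q ->
  dom_le P z /\ dom_le z Q.
Proof.
case=> t [/andP [t0 t1] ->] [/= le1 le2].
have between (x y : R) : x <= y -> x <= x + t * (y - x) <= y.
  move=> xy; have dxy : 0 <= y - x by rewrite subr_ge0.
  by rewrite lerDl mulr_ge0 //= -lerBrDl ler_piMl.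
have /andP [? ?] := between _ _ le1; have /andP [? ?] := between _ _ le2.
by split; split.
Qed.

Lemma scaled_le (t t' b d : R) : 0 < t' -> t <= t' -> 0 <= b -> t * b = t' * d -> d <= b.
Proof.
move=> t'0 tt' b0 tbd; rewrite -(ler_pM2l t'0) -tbd.
exact: ler_wpM2r.
Qed.

Lemma on_segments_common_start P Q Q' z :
  on_segment P Q z -> on_segment P Q' z -> dom_le P Q -> dom_le P Q' ->
  [\/ z = P, dom_le Q Q' | dom_le Q' Q].
Proof.
case=> t [/andP [t0 _] zt] [t' [/andP [t0' _] zt']].
rewrite /dom_le -[_ <= Q.1]subr_ge0 -[_ <= Q.2]subr_ge0.
rewrite -[_ <= Q'.1]subr_ge0 -[_ <= Q'.2]subr_ge0 => -[b1 b2] [d1 d2].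
have [t00|tp] := eqVneq t 0.
  by constructor 1; rewrite zt t00 !mul0r !addr0 -surjective_pairing.
have [t00|tp'] := eqVneq t' 0.
  by constructor 1; rewrite zt' t00 !mul0r !addr0 -surjective_pairing.
have {tp}t_gt0 : 0 < t by rewrite lt_def tp t0.
have {tp'}t'_gt0 : 0 < t' by rewrite lt_def tp' t0'.
have := zt; rewrite {1}zt' => -[/addrI e1 /addrI e2].
have [tt'|/ltW t't] := lerP t t'.
  constructor 3; split.
    by rewrite -(lerD2r (- P.1)); apply: scaled_le t'_gt0 tt' b1 (esym e1).
  by rewrite -(lerD2r (- P.2)); apply: scaled_le t'_gt0 tt' b2 (esym e2).
constructor 2; split.
  by rewrite -(lerD2r (- P.1)); apply: scaled_le t_gt0 t't d1 e1.
by rewrite -(lerD2r (- P.2)); apply: scaled_le t_gt0 t't d2 e2.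
Qed.

Definition nat_point (xy : nat * nat) : R * R := (xy.1%:R, xy.2%:R).

Lemma nat_point_inj : injective nat_point.
Proof. by case=> [x y] [x' y'] [/eqP + /eqP]; rewrite !eqr_nat => /eqP -> /eqP ->. Qed.

End Plane.

Section RootedTree.

Variables (n : nat) (e : rel 'I_n) (r : 'I_n).
Hypothesis tree : rooted_tree e r.

Let root_no_parent x : ~~ e x r. Proof. by case: tree. Qed.
Let unique_parent v : v != r -> #|[set u | e u v]| = 1. Proof. by case: tree => _ /(_ v). Qed.
Let root_reaches v : connect e r v. Proof. by case: tree. Qed.

Local Notation anc := (connect e).

Definition parent (v : 'I_n) : 'I_n := odflt v [pick u | e u v].

Lemma edge_nonroot u v : e u v -> v != r.
Proof. by apply: contraTneq => ->; apply: root_no_parent. Qed.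

Lemma parent_edge v : v != r -> e (parent v) v.
Proof.
move=> /unique_parent /eqP /cards1P [u Eu]; rewrite /parent.
case: pickP => [//|/(_ u)]; have : u \in [set u | e u v] by rewrite Eu set11.
by rewrite inE => ->.
Qed.

Lemma edge_parent u v : e u v -> parent v = u.
Proof.
move=> euv; have vr := edge_nonroot euv.
have /eqP /cards1P [w Ew] := unique_parent vr.
have : parent v \in [set u | e u v] by rewrite inE parent_edge.
have : u \in [set u | e u v] by rewrite inE.
by rewrite Ew !inE => /eqP -> /eqP.
Qed.

Lemma anc_cases u v : anc u v -> u = v \/ v != r /\ anc u (parent v).
Proof.
move=> /connectP [p]; elim/last_ind: p => [|p x _] /=; first by left.
rewrite rcons_path last_rcons => /andP [up ex] ->; right.
by rewrite (edge_parent ex) (edge_nonroot ex); split=> //; apply/connectP; exists p.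
Qed.

Lemma tree_ind (P : 'I_n -> Prop) :
  P r -> (forall v, v != r -> P (parent v) -> P v) -> forall v, P v.
Proof.
move=> Pr IH v; have /connectP [p] := root_reaches v.
elim/last_ind: p v => [|p x IHp] v /=; first by move=> _ ->.
rewrite rcons_path last_rcons => /andP [rp ex] ->.
by apply: IH (edge_nonroot ex) _; rewrite (edge_parent ex); apply: IHp.
Qed.

Lemma anc_root u : anc u r -> u = r.
Proof. by case/anc_cases => [//|[/eqP]]. Qed.

Lemma not_anc_parent v : v != r -> ~ anc v (parent v).
Proof.
elim/tree_ind: v => [/eqP //|v vr IH _] a.
case/anc_cases: (a) => [vp|[pr pa]]; first by move: IH; rewrite -vp; apply.
by apply: IH pr (connect_trans (connect1 (parent_edge vr)) pa).
Qed.

Lemma anc_antisym u v : anc u v -> anc v u -> u = v.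
Proof.
case/anc_cases => [//|[vr a] vu].
by case: (not_anc_parent vr); apply: connect_trans vu a.
Qed.

Lemma anc_edge_parent x p c : e p c -> anc x c -> x != c -> anc x p.
Proof.
move=> epc /anc_cases [-> |[_ a] _]; first by rewrite eqxx.
by rewrite -(edge_parent epc).
Qed.

Lemma anc_total u v w : anc u w -> anc v w -> anc u v \/ anc v u.
Proof.
elim/tree_ind: w u v => [|w wr IH] u v.
  by move=> /anc_root -> /anc_root ->; left.
case/anc_cases => [-> vw|[_ uw]]; first by right.
case/anc_cases => [-> |[_ vw]]; last exact: IH.
by left; apply: connect_trans uw (connect1 (parent_edge wr)).
Qed.

Lemma child_on_path u v : anc u v -> u != v -> exists2 c, e u c & anc c v.
Proof.
elim/tree_ind: v u => [|v vr IH] u.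
  by move=> /anc_root ->; rewrite eqxx.
case/anc_cases => [-> /eqP //|[_ a] uv].
have [->|up] := eqVneq u (parent v); first by exists v; rewrite ?parent_edge.
have [c uc cp] := IH u a up; exists c => //.
exact: connect_trans cp (connect1 (parent_edge vr)).
Qed.

Lemma siblings_incomparable p c c' : e p c -> e p c' -> c != c' -> ~ anc c c'.
Proof.
move=> epc epc' cc' a; have := anc_edge_parent epc' a cc'.
by rewrite -(edge_parent epc); apply: not_anc_parent (edge_nonroot epc).
Qed.

Lemma siblings_common_desc p c c' u : e p c -> e p c' -> anc c u -> anc c' u -> c = c'.
Proof.
move=> epc epc' cu c'u; apply/eqP/negPn/negP => cc'.
case: (anc_total cu c'u); first exact: siblings_incomparable epc epc' cc'.
by apply: siblings_incomparable epc' epc _; rewrite eq_sym.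
Qed.

Lemma anc_or_branch u v :
  [\/ anc u v, anc v u |
      exists p c c', [/\ e p c, e p c', c != c', anc c u & anc c' v]].
Proof.
elim/tree_ind: u => [|u ur IH]; first by constructor 1.
have pu := connect1 (parent_edge ur).
case: IH => [a | a | [p [c [c' [epc epc' cc' cu c'v]]]]].
- have [<-|pv] := eqVneq (parent u) v; first by constructor 2.
  have [c pc cv] := child_on_path a pv.
  have [<-|cu] := eqVneq c u; first by constructor 1.
  constructor 3; exists (parent u), u, c; split=> //; first exact: parent_edge.
  by rewrite eq_sym.
- by constructor 2; apply: connect_trans a pu.
- constructor 3; exists p, c, c'; split=> //; exact: connect_trans cu pu.
Qed.

Definition descendants v := [set z | anc v z].

(* Subtree size, ties broken by index; injective since [c < n]. *)
Definition weight (c : 'I_n) := #|descendants c| * n + c.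

Lemma weight_inj : injective weight.
Proof.
move=> c c' /(congr1 (modn^~ n)); rewrite !modnMDl !modn_small //.
exact: val_inj.
Qed.

Lemma weight_le_size c c' : weight c <= weight c' -> #|descendants c| <= #|descendants c'|.
Proof. rewrite /weight; have := ltn_ord c; have := ltn_ord c'; nia. Qed.

Definition heavy c :=
  (c != r) && [forall c', e (parent c) c' ==> (weight c' <= weight c)].

Lemma heavy_max p h c : e p h -> heavy h -> e p c -> #|descendants c| <= #|descendants h|.
Proof.
move=> eph /andP [_ /forallP /(_ c)]; rewrite (edge_parent eph) => /implyP hmax epc.
exact/weight_le_size/hmax.
Qed.

Lemma heavy_uniq p h h' : e p h -> e p h' -> heavy h -> heavy h' -> h = h'.
Proof.
move=> eph eph' hh hh'; apply: weight_inj; apply/eqP; rewrite eqn_leq.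
case/andP: hh hh' => _ /forallP /(_ h') + /andP [_ /forallP /(_ h)].
by rewrite !(edge_parent eph) (edge_parent eph') eph eph' /= => -> ->.
Qed.

Lemma exists_heavy p c : e p c -> exists2 h, e p h & heavy h.
Proof.
move=> epc; case: (arg_maxnP weight epc) => h eph hmax; exists h => //.
rewrite /heavy (edge_nonroot eph) (edge_parent eph) /=.
by apply/forallP => c'; apply/implyP; apply: hmax.
Qed.

(* Left-to-right order of siblings: the heavy child first, then by index. *)
Definition rank c := if heavy c then 0 else c.+1.

Lemma rank_siblings_inj p c c' : e p c -> e p c' -> rank c = rank c' -> c = c'.
Proof.
move=> epc epc'; rewrite /rank.
case: ifP => hc; case: ifP => hc' //; first by move=> _; exact: heavy_uniq epc epc' hc hc'.
by move=> [/val_inj].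
Qed.

Definition left_of u v := [exists p, exists c, exists c',
  [&& e p c, e p c', rank c < rank c', anc c u & anc c' v]].

Lemma left_ofP u v : reflect
  (exists p c c', [/\ e p c, e p c', rank c < rank c', anc c u & anc c' v])
  (left_of u v).
Proof.
apply: (iffP existsP) => [[p /existsP [c /existsP [c' /and5P [? ? ? ? ?]]]]|].
  by exists p, c, c'.
move=> [p [c [c' [? ? ? ? ?]]]]; exists p; apply/existsP; exists c.
by apply/existsP; exists c'; apply/and5P.
Qed.

Lemma left_of_trichotomy u v : [\/ anc u v, anc v u, left_of u v | left_of v u].
Proof.
case: (anc_or_branch u v) => [?|?|[p [c [c' [epc epc' cc' cu c'v]]]]].
- by constructor 1.
- by constructor 2.
have := contra_neq (rank_siblings_inj epc epc') cc'.
rewrite neq_ltn => /orP [lt|lt].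
  by constructor 3; apply/left_ofP; exists p, c, c'.
by constructor 4; apply/left_ofP; exists p, c', c.
Qed.

Lemma left_of_not_anc u v : left_of u v -> ~ anc u v /\ ~ anc v u.
Proof.
case/left_ofP => p [c [c' [epc epc' lt cu c'v]]].
have cc' w : anc c w -> anc c' w -> False.
  by move=> cw c'w; move: lt; rewrite (siblings_common_desc epc epc' cw c'w) ltnn.
split=> a; first exact: cc' (connect_trans cu a) c'v.
exact: cc' cu (connect_trans c'v a).
Qed.

Lemma left_of_irrefl u : ~~ left_of u u.
Proof. by apply/negP => /left_of_not_anc [/(_ (connect0 _ _))]. Qed.

Lemma left_of_trans x y z : left_of x y -> left_of y z -> left_of x z.
Proof.
case/left_ofP => p1 [d1 [d1' [e1 e1' lt1 d1x d1'y]]].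
case/left_ofP => p2 [d2 [d2' [e2 e2' lt2 d2y d2'z]]].
apply/left_ofP; have [ed|ne] := eqVneq d1' d2.
  subst d2; exists p1, d1, d2'; split=> //; last exact: ltn_trans lt2.
  by rewrite -(edge_parent e1') (edge_parent e2).
case: (anc_total d1'y d2y) => a.
  exists p1, d1, d1'; split=> //.
  exact: connect_trans (anc_edge_parent e2 a ne) (connect_trans (connect1 e2') d2'z).
exists p2, d2, d2'; split=> //.
have := anc_edge_parent e1' a; rewrite eq_sym => /(_ ne) d2p1.
exact: connect_trans d2p1 (connect_trans (connect1 e1) d1x).
Qed.

Lemma left_of_asym u v : left_of u v -> ~~ left_of v u.
Proof. by move=> uv; apply: contra (left_of_irrefl u); apply: left_of_trans. Qed.

Lemma left_of_descr z u v : left_of z u -> anc u v -> left_of z v.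
Proof.
case/left_ofP => p [c [c' [? ? ? ? c'u]]] uv.
by apply/left_ofP; exists p, c, c'; split=> //; apply: connect_trans c'u uv.
Qed.

Lemma left_of_descl z u v : left_of u z -> anc u v -> left_of v z.
Proof.
case/left_ofP => p [c [c' [? ? ? cu ?]]] uv.
by apply/left_ofP; exists p, c, c'; split=> //; apply: connect_trans cu uv.
Qed.

Definition ancestors v := [set z | anc z v].
Definition between u v := [set z | anc u z && anc z v].

(* The heads of the edges of the path from the root to [v]. *)
Definition root_path v := ancestors v :\ r.

Lemma root_path_split p c u : e p c -> anc c u ->
  root_path u = root_path p :|: between c u.
Proof.
move=> epc cu; apply/setP => z; rewrite !inE.
have pu : anc p u := connect_trans (connect1 epc) cu.
apply/idP/idP => [/andP [zr zu]|/orP [/andP [zr zp]|/andP [cz zu]]].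
- case: (anc_total zu cu) => [zc|cz]; last by rewrite cz zu orbT.
  have [-> |zc'] := eqVneq z c; first by rewrite connect0 cu orbT.
  by rewrite zr (anc_edge_parent epc zc zc').
- by rewrite zr (connect_trans zp pu).
rewrite zu andbT; apply: contraTneq cz => ->; apply/negP => /anc_root cr.
by move: (edge_nonroot epc); rewrite cr eqxx.
Qed.

Lemma root_path_between_disjoint p c u : e p c -> [disjoint root_path p & between c u].
Proof.
move=> epc; apply/disjointP => z; rewrite !inE => /andP [_ zp] /andP [cz _].
have cr := edge_nonroot epc; apply: (not_anc_parent cr).
by rewrite (edge_parent epc); apply: connect_trans cz zp.
Qed.

Lemma card_root_path_split (H : {set 'I_n}) p c u : e p c -> anc c u ->
  #|root_path u :&: H| = #|root_path p :&: H| + #|between c u :&: H|.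
Proof.
move=> epc cu; rewrite (root_path_split epc cu) setIUl cardsU_disjoint //.
by apply: disjointWl (subsetIl _ _) _; apply: disjointWr (subsetIl _ _) _;
  apply: root_path_between_disjoint epc.
Qed.

Definition lefts v := [set z | left_of z v].
Definition rights v := [set z | left_of v z].
Definition heavies := [set c | heavy c].

Definition xcoord v := #|lefts v| + #|root_path v :&: ~: heavies|.
Definition ycoord v := #|rights v| + #|root_path v :&: heavies|.

Lemma rank_lt_light c c' : rank c < rank c' -> ~~ heavy c'.
Proof. by apply: contraTN => hc'; rewrite /rank hc' ltn0. Qed.

Lemma coord_desc u v : anc u v -> u != v ->
  [/\ xcoord u <= xcoord v, ycoord u <= ycoord v
    & xcoord u + ycoord u < xcoord v + ycoord v].
Proof.
move=> uv neq; have [c uc cv] := child_on_path uv neq.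
have sL : #|lefts u| <= #|lefts v|.
  by apply/subset_leq_card/subsetP => z; rewrite !inE => /left_of_descr; apply.
have sR : #|rights u| <= #|rights v|.
  by apply/subset_leq_card/subsetP => z; rewrite !inE => /left_of_descl; apply.
have cB : 0 < #|between c v| by apply/card_gt0P; exists c; rewrite inE connect0.
have := cardsID heavies (between c v); rewrite setDE => cBH.
rewrite /xcoord /ycoord !(card_root_path_split _ uc cv); split; lia.
Qed.

Lemma coord_left u v : left_of u v ->
  xcoord u < xcoord v /\ ycoord v < ycoord u.
Proof.
move=> uv; have /left_ofP [p [cu [cv [epu epv lt cuu cvv]]]] := uv.
have subL : lefts u :|: between cu u \subset lefts v.
  apply/subsetP => z; rewrite !inE => /orP [zu|/andP [cuz _]].
    exact: left_of_trans zu uv.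
  by apply/left_ofP; exists p, cu, cv.
have disjL : [disjoint lefts u & between cu u].
  by apply/disjointP => z; rewrite !inE => /left_of_not_anc [zu _] /andP [_ /zu].
have subR : rights v :|: between cv v \subset rights u.
  apply/subsetP => z; rewrite !inE => /orP [vz|/andP [cvz _]].
    exact: left_of_trans uv vz.
  by apply/left_ofP; exists p, cu, cv.
have disjR : [disjoint rights v & between cv v].
  by apply/disjointP => z; rewrite !inE => /left_of_not_anc [_ zv] /andP [_ /zv].
have cvB : 0 < #|between cv v :&: ~: heavies|.
  by apply/card_gt0P; exists cv; rewrite !inE connect0 cvv (rank_lt_light lt).
have := subset_leq_card subL; rewrite cardsU_disjoint // => cL.
have := subset_leq_card subR; rewrite cardsU_disjoint // => cR.
have := cardsID heavies (between cv v); rewrite setDE => hv.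
have := subset_leq_card (subsetIl (between cu u) (~: heavies)) => hu.
rewrite /xcoord /ycoord !(card_root_path_split _ epu cuu) !(card_root_path_split _ epv cvv).
lia.
Qed.

Lemma coord_sum v : xcoord v + ycoord v + #|descendants v| = n.
Proof.
have cA : #|ancestors v| = #|root_path v|.+1.
  by rewrite (cardsD1 r) inE root_reaches.
have AD : ancestors v :&: descendants v = [set v].
  apply/setP => z; rewrite !inE; apply/andP/eqP => [[zv vz]|->].
    exact: anc_antisym.
  by rewrite connect0.
have cAD : #|ancestors v :|: descendants v| = (#|ancestors v| + #|descendants v|).-1.
  by rewrite cardsU AD cards1 subn1.
have disjLR : [disjoint lefts v & rights v].
  by apply/disjointP => z; rewrite !inE => /left_of_asym /negP.
have disjLRA : [disjoint lefts v :|: rights v & ancestors v :|: descendants v].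
  by apply/disjointP => z; rewrite !inE => /orP [] /left_of_not_anc [? ?] /orP [].
have cover : lefts v :|: rights v :|: (ancestors v :|: descendants v) = setT.
  by apply/setP => z; rewrite !inE; case: (left_of_trichotomy z v) => ->; rewrite ?orbT.
have := cardsID heavies (root_path v); rewrite setDE => cAH.
have := card_ord n; rewrite -cardsT -cover (cardsU_disjoint disjLRA).
rewrite (cardsU_disjoint disjLR) cAD cA.
rewrite /xcoord /ycoord; lia.
Qed.

Lemma xcoord_gap v : xcoord v = 0 \/ #|descendants v| <= xcoord v.
Proof.
have [E|[c]] := set_0Vmem (root_path v :&: ~: heavies).
  left; rewrite /xcoord E cards0 addn0; apply/eqP; rewrite cards_eq0 -subset0.
  apply/subsetP => z; rewrite inE => /left_ofP [p [c [c' [_ epc' lt _ c'v]]]].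
  suff : c' \in root_path v :&: ~: heavies by rewrite E inE.
  by rewrite !inE (edge_nonroot epc') c'v (rank_lt_light lt).
rewrite !inE => /andP [/andP [cr cv] lc]; right.
have epc := parent_edge cr; have [h eph hh] := exists_heavy epc.
have sL : descendants h \subset lefts v.
  apply/subsetP => z; rewrite !inE => hz; apply/left_ofP.
  by exists (parent c), h, c; split=> //; rewrite /rank hh (negbTE lc).
have sD : descendants v \subset descendants c.
  by apply/subsetP => z; rewrite !inE; apply: connect_trans cv.
apply: leq_trans (subset_leq_card sD) _; apply: leq_trans (heavy_max eph hh epc) _.
by apply: leq_trans (subset_leq_card sL) _; apply: leq_addr.
Qed.

Section Drawing.

Variables (R : realFieldType) (p : 'I_n -> R * R).
Hypothesis p_dom : forall u v, anc u v <-> dom_le (p u) (p v).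

Lemma dominance_injective : injective p.
Proof. by move=> u v puv; apply: anc_antisym; apply/p_dom; rewrite puv; apply: dom_le_refl. Qed.

Lemma dominance_planar : planar_drawing e p.
Proof.
move=> a b c d eab ecd neq z sab scd.
have dab := (p_dom a b).1 (connect1 eab); have dcd := (p_dom c d).1 (connect1 ecd).
have [az zb] := on_segment_dom sab dab; have [cz zd] := on_segment_dom scd dcd.
have [ac|nac] := eqVneq a c.
  subst c; have bd : b != d by apply: contraNneq neq => ->.
  case: (on_segments_common_start sab scd dab dcd) => [zP|/p_dom db|/p_dom bd'].
  - by rewrite zP !inE eqxx.
  - by case: (siblings_incomparable eab ecd bd).
  - by case: (siblings_incomparable ecd eab); rewrite // eq_sym.
have [bd|nbd] := eqVneq b d.
  by subst d; move: nac; rewrite -(edge_parent eab) (edge_parent ecd) eqxx.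
have [cb|ncb] := eqVneq c b.
  subst c; have -> : z = p b by apply: dom_le_antisym.
  by rewrite !inE !eqxx orbT.
have [ad|nad] := eqVneq a d.
  subst d; have -> : z = p a by apply: dom_le_antisym.
  by rewrite !inE !eqxx orbT.
have /p_dom ad := dom_le_trans az zd; have /p_dom cb := dom_le_trans cz zb.
have := anc_edge_parent ecd ad nad; have := anc_edge_parent eab cb ncb.
by move=> ca ac; move: nac; rewrite (anc_antisym ac ca) eqxx.
Qed.

End Drawing.

Definition coord_point (R : realFieldType) v : R * R := nat_point R (xcoord v, ycoord v).

Lemma coord_point_dom (R : realFieldType) u v :
  anc u v <-> dom_le (coord_point R u) (coord_point R v).
Proof.
rewrite /dom_le /coord_point /= !ler_nat; split=> [uv|[lex ley]].
  have [->|neq] := eqVneq u v; first by [].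
  by case: (coord_desc uv neq).
case: (left_of_trichotomy u v) => [//|vu|/coord_left|/coord_left]; [|lia|lia].
have [->|neq] := eqVneq v u; first exact: connect0.
by case: (coord_desc vu neq) => *; lia.
Qed.

End RootedTree.

(* [grid n] lists the pairs (x, y) with x + y < n and either x = 0 or
   x >= n - x - y; the first block is x = 0, the second is indexed by
   s = n - x - y. *)
Definition grid (n : nat) : seq (nat * nat) :=
  [seq (0, y) | y <- iota 0 n] ++
  [seq (x, n - s - x) | s <- iota 1 n./2, x <- iota s (n - 2 * s).+1].

Lemma half_double_le n : 2 * n./2 <= n.
Proof. by rewrite mulnC muln2 -{2}(odd_double_half n) leq_addl. Qed.

Lemma mem_grid n x y s : x + y + s = n -> 0 < s -> x = 0 \/ s <= x ->
  (x, y) \in grid n.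
Proof.
move=> xys s0 [->|sx]; rewrite mem_cat; apply/orP.
  by left; apply/mapP; exists y; rewrite // mem_iota; lia.
right; apply/allpairsPdep; exists s, x; split.
- have := half_double_le n; rewrite mem_iota; have := odd_double_half n; lia.
- by rewrite mem_iota; lia.
- by congr pair; lia.
Qed.

Lemma grid_uniq n : uniq (grid n).
Proof.
rewrite cat_uniq map_inj_uniq ?iota_uniq ?andTb; last by move=> y y' [].
apply/andP; split.
  apply/hasPn => z /allpairsPdep [s [x [+ + ->]]]; rewrite !mem_iota => s1 sx.
  by apply/mapP => -[y _ [x0]]; lia.
apply: allpairs_uniq_dep => [|s _|[s x] [s' x']]; rewrite ?iota_uniq //.
move=> /allpairsPdep [s1 [x1 [+ + [-> ->]]]] /allpairsPdep [s2 [x2 [+ + [-> ->]]]].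
rewrite !mem_iota /= => ? ? ? ? [ex ey]; have es : s1 = s2 by lia.
by rewrite ex es.
Qed.

Lemma size_grid n : size (grid n) = n + n./2 * (n - n./2).
Proof.
rewrite size_cat size_map size_iota size_allpairs_dep; congr addn.
have : 2 * n./2 <= n := half_double_le n; elim: n./2 => [//|k IH] hk.
rewrite -[k.+1]addn1 iotaD map_cat sumn_cat /= size_iota IH; lia.
Qed.

Lemma grid_size_half_square n : 4 * (n./2 * (n - n./2)) + odd n = n ^ 2.
Proof.
have := odd_double_half n; move: (n./2) (odd n) => k [] <-; rewrite -muln2 /=; nia.
Qed.

Local Open Scope ring_scope.

Lemma size_grid_bounds (R : realFieldType) n : (0 < n)%N ->
  2^-1 * n%:R <= ((size (grid n))%:R : R) - n%:R ^+ 2 / 4%:R <= n%:R.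
Proof.
move=> n0; rewrite size_grid -(natrX R) -grid_size_half_square.
move: (n./2 * (n - n./2))%N => m; rewrite 2!natrD natrM.
have : 1 <= n%:R :> R by rewrite ler1n.
by case: (odd n) => /= ?; apply/andP; split; lra.
Qed.

Local Open Scope fset_scope.

Definition grid_points (R : realFieldType) n : {fset R * R} :=
  [fset P in map (nat_point R) (grid n)].

Lemma card_grid_points (R : realFieldType) n : #|` grid_points R n| = size (grid n).
Proof.
rewrite card_fseq undup_id ?size_map // map_inj_uniq ?grid_uniq //.
exact: nat_point_inj.
Qed.

Theorem theorem15 (R : realType) :
  exists U : nat -> {fset (R * R)},
    (exists (c1 c2 : R) (N : nat), 0 < c1 /\ 0 < c2 /\
       forall n : nat, (N <= n)%N ->
         c1 * n%:R <= (#|` U n|)%:R - n%:R ^+ 2 / 4%:R <= c2 * n%:R) /\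
    (forall (n : nat) (e : rel 'I_n) (r : 'I_n), rooted_tree e r ->
       exists p : 'I_n -> R * R,
         (forall v, p v \in U n) /\ dominance_drawing e p /\ planar_drawing e p).
Proof.
exists (grid_points R); split.
  exists 2^-1, 1, 1%N; split; first by rewrite invr_gt0.
  split=> //.
  by move=> n n0; rewrite mul1r card_grid_points; apply: size_grid_bounds.
move=> n e r tree; have dom := coord_point_dom tree R.
exists (coord_point e r R); split; last split.
- move=> v; rewrite inE; apply: map_f.
  apply: mem_grid (coord_sum tree v) _ (xcoord_gap tree v).
  by apply/card_gt0P; exists v; rewrite inE connect0.
- split; [exact (dominance_injective tree dom) | exact: dom].
- exact (dominance_planar tree dom).
Qed.
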